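(* Fix an integer $k\geq 1$. For $m\geq 1$, let $X_0(k,m)$ be the set of permutations $p=p_1p_2\cdots p_m\in S_m$ that avoid the pattern $231$ and satisfy $p_1=m$ and $p_k=1$. Then, as formal power series, \[\sum_{m\geq 1}\vert X_0(k,m)\vert x^m=x^kC(x)^{k-1},\] where $C(x)=\dfrac{1-\sqrt{1-4x}}{2x}=\sum_{m\geq 0}C_mx^m$ is the generating function of the Catalan numbers $C_m=\frac{1}{m+1}\binom{2m}{m}$.
   Context: A permutation $\pi=\pi_1\cdots\pi_n$ contains a pattern $\tau=\tau_1\cdots\tau_k\in S_k$ if there are indices $i_1<\cdots<i_k$ with $\pi_{i_j}<\pi_{i_\ell}$ iff $\tau_j<\tau_\ell$ for all $j,\ell$; otherwise $\pi$ avoids $\tau$. *)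

From mathcomp Require Import all_boot all_order all_fingroup.
Set Implicit Arguments. Unset Strict Implicit. Unset Printing Implicit Defensive.

(* A permutation p of 'I_n is read as the word p(0) p(1) ... p(n-1)
   (0-based values: the paper's value v corresponds to v-1 here).
   [contains p tau] : the word of p contains the pattern tau (a seq nat,
   read as a word; only the relative order of its entries matters), i.e.
   there are positions f 0 < f 1 < ... with p (f a) < p (f b) iff tau_a < tau_b. *)
Definition contains (n : nat) (p : 'S_n) (tau : seq nat) : bool :=
  [exists f : {ffun 'I_(size tau) -> 'I_n},
     [forall a : 'I_(size tau), forall b : 'I_(size tau),
        ((a < b) ==> (f a < f b)) &&
        ((p (f a) < p (f b)) == (nth 0 tau a < nth 0 tau b))]].

Definition avoids (n : nat) (p : 'S_n) (tau : seq nat) : bool :=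
  ~~ contains p tau.

(* X_0(k,m): 231-avoiding p in S_m with p_1 = m and p_k = 1
   (1-based positions/values of the paper; position i is the ordinal i-1,
   value v is the ordinal v-1). *)
Definition X0 (k m : nat) : {set 'S_m} :=
  [set p : 'S_m | [&& avoids p [:: 2; 3; 1],
     [exists i : 'I_m, (val i == 0) && (val (p i) == m.-1)] &
     [exists i : 'I_m, (val i == k.-1) && (val (p i) == 0)]]].

Definition catalan (m : nat) : nat := 'C(m.*2, m) %/ m.+1.

Fixpoint catpow_coef (j n : nat) : nat :=
  match j with
  | 0 => (n == 0)%N
  | j'.+1 => \sum_(i < n.+1) catalan i * catpow_coef j' (n - i)
  end.

Definition rhs_coef (k m : nat) : nat :=
  if k <= m then catpow_coef k.-1 (m - k) else 0.

From mathcomp Require Import all_boot all_order all_fingroup zify.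

(* A 231-avoiding word a :: r with distinct letters has the shape
   a :: l ++ h, where l lists the letters below a and h those above a, both
   231-avoiding (an element above a followed by one below a would complete a
   231 with a); conversely every such word avoids 231.  Splitting on the
   first letter therefore counts avoiders by the Catalan recurrence, and
   numbers obeying that recurrence are Catalan by the ballot formula for the
   coefficients of the powers of their generating series.  The same
   splitting locates the minimum: it lies in l, one place further right, so
   the avoiders of length n with minimum at position j are counted by the
   coefficient of x^n in (x C(x))^(j+1).  Finally a leading maximum never
   takes part in a 231, so X_0(k, m) is in bijection with the avoiders of
   length m - 1 whose minimum is at position k - 1. *)

Set Implicit Arguments.
Unset Strict Implicit.
Unset Printing Implicit Defensive.

Definition conv (f g : nat -> nat) (n : nat) : nat :=
  \sum_(i < n.+1) f i * g (n - i).

Fixpoint convpow (c : nat -> nat) (j n : nat) : nat :=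
  if j is j'.+1 then conv c (convpow c j') n else n == 0.

Definition mulX (g : nat -> nat) (n : nat) : nat :=
  if n is n'.+1 then g n' else 0.

Lemma catpow_coefE : catpow_coef =2 convpow catalan.
Proof. by elim=> [//|j IHj] n /=; apply: eq_bigr => i _; rewrite IHj. Qed.

Lemma convC f g : conv f g =1 conv g f.
Proof.
move=> n; rewrite /conv (reindex_inj rev_ord_inj); apply: eq_bigr => i _ /=.
by rewrite subSS subKn 1?mulnC // -ltnS.
Qed.

Lemma eq_conv f g1 g2 : g1 =1 g2 -> conv f g1 =1 conv f g2.
Proof. by move=> eq_g n; apply: eq_bigr => i _; rewrite eq_g. Qed.

Lemma conv_addr f g h n :
  conv f (fun x => g x + h x) n = conv f g n + conv f h n.
Proof. by rewrite /conv -big_split; apply: eq_bigr => i _; rewrite mulnDr. Qed.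

Lemma conv_mulX f g : conv f (mulX g) =1 mulX (conv f g).
Proof.
case=> [|n]; first by rewrite /conv big_ord1 muln0.
rewrite /conv big_ord_recr /= subnn muln0 addn0.
by apply: eq_bigr => i _; rewrite subSn // -ltnS.
Qed.

Lemma convpow1 c : convpow c 1 =1 c.
Proof.
move=> n; rewrite /= /conv big_ord_recr /= subnn muln1 big1 ?add0n // => i _.
by rewrite subn_eq0 leqNgt ltn_ord muln0.
Qed.

Section CatalanRecurrence.

Variable c : nat -> nat.
Hypothesis c0 : c 0 = 1.
Hypothesis cS : forall n, c n.+1 = conv c c n.

Lemma convpow_at0 j : convpow c j 0 = 1.
Proof. by elim: j => [//|j IHj]; rewrite /= /conv big_ord1 c0 IHj. Qed.

(* C^(j+1) = C^j + x C^(j+2), from C = 1 + x C^2. *)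
Lemma convpowS j n :
  convpow c j.+1 n = convpow c j n + mulX (convpow c j.+2) n.
Proof.
elim: j n => [|j IHj] [|n].
- by rewrite convpow1 c0.
- by rewrite convpow1 cS /= -(eq_conv _ (convpow1 c)).
- by rewrite !convpow_at0.
- by rewrite -[LHS]/(conv c (convpow c j.+1) n.+1) (eq_conv _ IHj) conv_addr conv_mulX.
Qed.

Lemma convpow_ballot n J :
  convpow c J.+1 n.+1 + 'C(n.*2 + J.+2, n) = 'C(n.*2 + J.+2, n.+1).
Proof.
elim: n J => [|n IHn] J.
  have at1 J' : convpow c J'.+1 1 = convpow c J' 1 + 1.
    by rewrite convpowS -[mulX _ 1]/(convpow c J'.+2 0) convpow_at0.
  rewrite bin0 bin1 double0 add0n; elim: J => [|J IHJ]; first by rewrite at1.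
  by rewrite at1 IHJ addn1.
have shift J' : n.+1.*2 + J'.+2 = (n.*2 + J'.+3).+1 by lia.
elim: J => [|J IHJ].
  have sym : 'C(n.*2 + 3, n.+2) = 'C(n.*2 + 3, n.+1).
    by rewrite -(@bin_sub (n.*2 + 3) n.+1); first congr 'C(_, _); lia.
  rewrite convpowS -[mulX _ _]/(convpow c 2 n.+1) shift !binS sym.
  have := IHn 1; rewrite [convpow c 0 _]/=; lia.
rewrite convpowS -[mulX _ _]/(convpow c J.+3 n.+1) !shift !binS.
have := IHn J.+2; move: IHJ; rewrite shift -addnS; lia.
Qed.

Lemma catalan_unique n : c n = catalan n.
Proof.
case: n => [|n]; first by rewrite c0.
have := convpow_ballot n 0; have := mul_bin_left n.*2.+2 n.
rewrite convpow1 addn2 /catalan doubleS.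
set A := 'C(_, n.+1); set B := 'C(_, n) => AB cB.
have -> : A = c n.+1 * n.+2 by nia.
by rewrite mulnK.
Qed.

End CatalanRecurrence.

Fixpoint starts231 (x : nat) (r : seq nat) : bool :=
  if r is y :: r' then (x < y) && has (ltn^~ x) r' || starts231 x r' else false.

Fixpoint has231 (s : seq nat) : bool :=
  if s is x :: r then starts231 x r || has231 r else false.

Lemma starts231P x r :
  reflect (exists j l, [/\ j < l, l < size r & nth 0 r l < x < nth 0 r j])
          (starts231 x r).
Proof.
apply: (iffP idP).
  elim: r => [//|y r IHr] /= /orP[/andP[xy /hasP[z zr zx]]|/IHr[j [l [jl lr lxj]]]];
    last by exists j.+1, l.+1.
  exists 0, (index z r).+1; split => //=; first by rewrite ltnS index_mem.
  by rewrite nth_index // zx xy.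
elim: r => [|y r IHr] [[|j] [[|l] [//= jl lr lxj]]] //=.
  case/andP: lxj => lx ->; apply/orP; left.
  by apply/hasP; exists (nth 0 r l); rewrite ?mem_nth.
by apply/orP; right; apply: IHr; exists j, l.
Qed.

Lemma has231P s :
  reflect (exists i j l, [/\ i < j, j < l, l < size s &
                           nth 0 s l < nth 0 s i < nth 0 s j])
          (has231 s).
Proof.
apply: (iffP idP).
  elim: s => [//|x r IHr] /= /orP[/starts231P[j [l [jl lr lxj]]]|].
    by exists 0, j.+1, l.+1.
  by case/IHr=> i [j [l [ij jl lr lij]]]; exists i.+1, j.+1, l.+1.
elim: s => [|x r IHr] [[|i] [[|j] [[|l] [//= ij jl lr lij]]]] //=.
  by apply/orP; left; apply/starts231P; exists j, l.
by apply/orP; right; apply: IHr; exists i, j, l.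
Qed.

Lemma starts231_subseq x r1 r2 :
  subseq r1 r2 -> starts231 x r1 -> starts231 x r2.
Proof.
elim: r2 r1 => [|y r2 IHr] [|z r1] //=.
case: eqP => [<- | _] sub12; last by move/(IHr _ sub12)->; rewrite orbT.
case/orP=> [/andP[-> /hasP[u /(mem_subseq sub12) ur2 ux]]|/(IHr _ sub12)->].
  by apply/orP; left; apply/hasP; exists u.
by rewrite orbT.
Qed.

Lemma has231_subseq s1 s2 : subseq s1 s2 -> has231 s1 -> has231 s2.
Proof.
elim: s2 s1 => [|y s2 IHs] [|z s1] //=.
case: eqP => [<- | _] sub12; last by move/(IHs _ sub12)->; rewrite orbT.
case/orP=> [/(starts231_subseq sub12)->|/(IHs _ sub12)->] //.
by rewrite orbT.
Qed.

Lemma starts231_small x r : all (ltn^~ x) r -> starts231 x r = false.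
Proof.
elim: r => [//|y r IHr] /= /andP[yx /IHr->]; rewrite orbF.
by apply/negbTE; rewrite negb_and -leqNgt ltnW.
Qed.

Lemma starts231_cat_large x l h :
  all (ltn x) h -> starts231 x (l ++ h) = starts231 x l.
Proof.
move=> hx; have no_small : ~~ has (ltn^~ x) h.
  by apply/hasPn => z /(allP hx) xz; rewrite -leqNgt ltnW.
elim: l => [|y l IHl] /=; last by rewrite has_cat (negbTE no_small) orbF IHl.
apply/negP => /starts231P[j [l [jl lh /andP[lx _]]]].
by case/hasP: no_small; exists (nth 0 h l); rewrite ?mem_nth.
Qed.

Lemma has231_cat l h :
  allrel ltn l h -> has231 (l ++ h) = has231 l || has231 h.
Proof.
elim: l => [//|x l IHl] /= /andP[xh lh].
by rewrite starts231_cat_large // IHl // orbA.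
Qed.

Lemma has231_pivot a l h : all (ltn^~ a) l -> all (ltn a) h ->
  has231 (a :: l ++ h) = has231 l || has231 h.
Proof.
move=> small_l large_h; rewrite /= starts231_cat_large // starts231_small //.
rewrite has231_cat //; apply/allrelP => x y /(allP small_l) xa /(allP large_h) ay.
exact: ltn_trans ay.
Qed.

Lemma starts231_split a r : ~~ starts231 a r -> a \notin r ->
  r = filter (ltn^~ a) r ++ filter (ltn a) r.
Proof.
elim: r => [//|y r IHr] /=; rewrite negb_or inE negb_or.
move=> /andP[ya_small no231] /andP[ay ar].
case: ltngtP ay => // [ya|ay] _; first by rewrite /= -IHr.
move: ya_small; rewrite ay /= => no_small.
have /eqP-> : filter (ltn^~ a) r == [::] by rewrite -[_ == _]negbK -has_filter.
congr (_ :: _); apply/esym/all_filterP/allP => z zr /=.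
rewrite ltn_neqAle eq_sym (memPn ar) //= leqNgt; apply: contra no_small => za.
by apply/hasP; exists z.
Qed.

(* f is fuel: the list is meaningful only when n <= f. *)
Fixpoint gen231 (f lo n : nat) : seq (seq nat) :=
  match f, n with
  | f'.+1, n'.+1 =>
      [seq lo + i :: t | i <- iota 0 n,
        t <- [seq l ++ h | l <- gen231 f' lo i, h <- gen231 f' (lo + i).+1 (n' - i)]]
  | _, _ => [:: [::]]
  end.

Lemma gen231_0 f lo : gen231 f lo 0 = [:: [::]].
Proof. by case: f. Qed.

Lemma gen231S f lo n :
  gen231 f.+1 lo n.+1 =
    [seq lo + i :: t | i <- iota 0 n.+1,
      t <- [seq l ++ h | l <- gen231 f lo i, h <- gen231 f (lo + i).+1 (n - i)]].
Proof. by []. Qed.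

Lemma perm_iota_pivot lo i n : i <= n ->
  perm_eql (iota lo n.+1) (lo + i :: iota lo i ++ iota (lo + i).+1 (n - i)).
Proof.
move=> le_in; apply/permPl; rewrite perm_sym -cat1s perm_catCA /=.
by rewrite -[_ :: iota _ _]/(iota _ (n - i).+1) -iotaD addnS subnKC.
Qed.

Lemma filter_pivot_ltn lo i m :
  [seq x <- iota lo i ++ iota (lo + i).+1 m | x < lo + i] = iota lo i.
Proof.
rewrite filter_cat (eq_in_filter (a2 := predT)) ?filter_predT; last first.
  by move=> x; rewrite mem_iota => /andP[_ ->].
rewrite (eq_in_filter (a2 := pred0)) ?filter_pred0 ?cats0 // => x.
by rewrite mem_iota => /andP[/ltnW/leq_gtF].
Qed.

Lemma filter_pivot_gtn lo i m :
  [seq x <- iota lo i ++ iota (lo + i).+1 m | lo + i < x] = iota (lo + i).+1 m.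
Proof.
rewrite filter_cat (eq_in_filter (a2 := pred0)) ?filter_pred0; last first.
  by move=> x; rewrite mem_iota => /andP[_ /ltnW/leq_gtF].
rewrite (eq_in_filter (a2 := predT)) ?filter_predT // => x.
by rewrite mem_iota => /andP[->].
Qed.

Lemma mem_gen231 f lo n t : n <= f ->
  (t \in gen231 f lo n) = perm_eq t (iota lo n) && ~~ has231 t.
Proof.
elim: f lo n t => [|f IHf] lo [|n] t // le_nf; rewrite ?gen231_0 ?inE.
- by apply/eqP/andP => [->|[/perm_nilP]].
- by apply/eqP/andP => [->|[/perm_nilP]].
rewrite gen231S; apply/allpairsPdep/andP.
  case=> i [_ [i_n /allpairsP[[l h] [/= l_gen h_gen ->]] ->]].
  have {}i_n : i <= n by rewrite mem_iota in i_n; lia.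
  move: l_gen h_gen; rewrite !IHf; try lia.
  case/andP=> [perm_l avoid_l] /andP[perm_h avoid_h].
  have small_l : all (ltn^~ (lo + i)) l.
    by apply/allP => x; rewrite (perm_mem perm_l) mem_iota => /andP[].
  have large_h : all (ltn (lo + i)) h.
    by apply/allP => x; rewrite (perm_mem perm_h) mem_iota => /andP[].
  split; first by rewrite perm_sym (perm_iota_pivot _ i_n) perm_cons perm_cat 1?perm_sym.
  by rewrite has231_pivot // negb_or avoid_l.
case: t => [|a r] [perm_t avoid_t]; first by move/perm_size: perm_t; rewrite size_iota.
have [i a_i i_n] : exists2 i, a = lo + i & i <= n.
  move: (perm_mem perm_t a); rewrite mem_head mem_iota => /esym/andP[lo_a a_n].
  by exists (a - lo); lia.
subst a; move: perm_t avoid_t.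
rewrite perm_sym (perm_iota_pivot _ i_n) perm_cons perm_sym.
rewrite /= negb_or => perm_r /andP[no231_i avoid_r].
have i_r : lo + i \notin r.
  by rewrite (perm_mem perm_r) mem_cat !mem_iota negb_or; apply/andP; split; lia.
exists i, r; split=> //; first by rewrite in_cons mem_iota; lia.
apply/allpairsP; exists ([seq x <- r | x < lo + i], [seq x <- r | lo + i < x]) => /=.
split; last exact: starts231_split.
all: rewrite IHf; try lia.
all: rewrite (contra (has231_subseq (filter_subseq _ _))) // andbT.
  by rewrite -(filter_pivot_ltn lo i (n - i)) perm_filter.
by rewrite -(filter_pivot_gtn lo i (n - i)) perm_filter.
Qed.

Lemma size_mem_gen231 f lo n t : n <= f -> t \in gen231 f lo n -> size t = n.
Proof. by move=> le_nf; rewrite mem_gen231 // => /andP[/perm_size-> _]; rewrite size_iota. Qed.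

Lemma uniq_gen231 f lo n : n <= f -> uniq (gen231 f lo n).
Proof.
elim: f lo n => [|f IHf] lo [|n] // le_nf; rewrite ?gen231_0 // gen231S.
apply: allpairs_uniq_dep => [|i|[i t] [j u] _ _ /= [/addnI eq_ij ->]]; last by rewrite eq_ij.
  exact: iota_uniq.
rewrite mem_iota => /andP[_ lt_in].
apply: allpairs_uniq; rewrite ?IHf //; try lia.
move=> [l h] [l' h'] /allpairsP[[l1 h1] [/= l1_gen _ [-> ->]]].
move=> /allpairsP[[l2 h2] [/= l2_gen _ [-> ->]]] /= /eqP.
rewrite eqseq_cat; last first.
  by rewrite (size_mem_gen231 _ l1_gen) ?(size_mem_gen231 _ l2_gen) //; lia.
by case/andP=> /eqP-> /eqP->.
Qed.

Lemma count_allpairs (S : Type) (T R : eqType) (F : S -> T -> R)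
    (P : pred R) (Q : pred S) (s : seq S) (t : seq T) :
  (forall x y, y \in t -> P (F x y) = Q x) ->
  count P [seq F x y | x <- s, y <- t] = count Q s * size t.
Proof.
move=> PQ; elim: s => [//|x s IHs]; rewrite allpairs_cons count_cat IHs count_map.
rewrite (eq_in_count (a2 := fun=> Q x)); last by move=> y; apply: PQ.
by rewrite /= mulnDl; case: (Q x); rewrite ?count_predT ?count_pred0 ?mul1n.
Qed.

Lemma count_gen231S (P : pred (seq nat)) (Q : nat -> pred (seq nat)) f lo n :
  (forall i l h, i <= n -> h \in gen231 f (lo + i).+1 (n - i) ->
     P (lo + i :: l ++ h) = Q i l) ->
  count P (gen231 f.+1 lo n.+1) =
    \sum_(i < n.+1) count (Q i) (gen231 f lo i) * size (gen231 f (lo + i).+1 (n - i)).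
Proof.
move=> PQ; rewrite gen231S count_flatten -map_comp sumnE big_map.
rewrite -[iota 0 _]/(index_iota 0 n.+1) big_mkord.
apply: eq_bigr => i _ /=; rewrite count_map; apply: count_allpairs => l h /=.
by apply: PQ; rewrite -ltnS.
Qed.

Lemma size_gen231 f lo n : n <= f -> size (gen231 f lo n) = catalan n.
Proof.
move=> le_nf; pose c n := size (gen231 n 0 n).
have sizeS f' lo' n' : size (gen231 f'.+1 lo' n'.+1) =
    \sum_(i < n'.+1) size (gen231 f' lo' i) * size (gen231 f' (lo' + i).+1 (n' - i)).
  rewrite -count_predT (count_gen231S (Q := fun=> predT)) //.
have sizeE m f' lo' : m <= f' -> size (gen231 f' lo' m) = c m.
  elim/ltn_ind: m f' lo' => [[|m] IHm] [|f'] lo' // le_mf; rewrite /c ?gen231_0 // !sizeS.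
  apply: eq_bigr => i _; rewrite !IHm //; have := ltn_ord i; lia.
rewrite sizeE //; apply: catalan_unique => [//|m].
rewrite /c sizeS; apply: eq_bigr => i _; rewrite !sizeE //; have := ltn_ord i; lia.
Qed.

Lemma iter_mulX k g n : iter k mulX g n = if k <= n then g (n - k) else 0.
Proof.
elim: k n => [|k IHk] n; first by rewrite subn0.
by case: n => [//|n]; rewrite iterS /= IHk ltnS subSS.
Qed.

Lemma conv_iter_mulX k f g : conv (iter k mulX f) g =1 iter k mulX (conv f g).
Proof.
elim: k => [//|k IHk] n.
by rewrite !iterS convC conv_mulX; case: n => [//|n] /=; rewrite convC IHk.
Qed.

(* The default lo.+1 keeps positions past the end from counting. *)
Lemma count_gen231_min_at j f lo n : n <= f ->
  count (fun t => nth lo.+1 t j == lo) (gen231 f lo n) =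
    iter j.+1 mulX (convpow catalan j.+1) n.
Proof.
elim: j f lo n => [|j IHj] f lo [|n] le_nf; try by rewrite gen231_0 /= gtn_eqF.
all: case: f le_nf => // f le_nf.
- rewrite (count_gen231S (Q := fun i _ => i == 0)) => [|i l h _ _]; last first.
    by rewrite /= -{2}[lo]addn0 eqn_add2l.
  rewrite big_ord_recl big1 => [|i _]; last by rewrite count_pred0.
  by rewrite count_predT gen231_0 size_gen231 ?addn0 ?mul1n ?subn0 // -(convpow1 catalan n).
rewrite (count_gen231S (Q := fun i l => nth lo.+1 l j == lo)) => [|i l h le_in]; last first.
  rewrite mem_gen231 1?leq_subLR ?leq_addl //; last by lia.
  case/andP=> perm_h _; have lo_h x : x \in h -> lo < x.
    by rewrite (perm_mem perm_h) mem_iota; lia.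
  rewrite /= nth_cat; case: ltnP => // le_lj.
  rewrite (nth_default _ le_lj) (gtn_eqF (ltnSn lo)).
  case: (ltnP (j - size l) (size h)) => [/(mem_nth lo.+1)/lo_h/gtn_eqF//|].
  by move/(nth_default lo.+1)->; apply: gtn_eqF.
transitivity (conv (iter j.+1 mulX (convpow catalan j.+1)) catalan n).
  by apply: eq_bigr => i _; rewrite IHj ?size_gen231 //; have := ltn_ord i; lia.
rewrite conv_iter_mulX -[RHS]/(iter j.+1 mulX (convpow catalan j.+2) n).
by rewrite !iter_mulX convC.
Qed.

Lemma count_gen231_head_max (P : pred (seq nat)) f lo n :
  count (fun t => (nth lo t 0 == lo + n) && P t) (gen231 f.+1 lo n.+1) =
    count (fun l => P (lo + n :: l)) (gen231 f lo n).
Proof.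
rewrite (count_gen231S (Q := fun i l => (i == n) && P (lo + n :: l))) => [|i l h _];
  last first.
  rewrite /= eqn_add2l; case: eqP => // ->.
  by rewrite subnn gen231_0 inE => /eqP->; rewrite cats0.
rewrite big_ord_recr big1 => [|i _]; last by rewrite (ltn_eqF (ltn_ord i)) count_pred0.
by rewrite /= subnn gen231_0 muln1 eqxx.
Qed.

Section PermutationWords.

Variable m : nat.

Definition word (p : 'S_m) : seq nat := [seq val (p i) | i <- enum 'I_m].

Lemma size_word p : size (word p) = m.
Proof. by rewrite size_map size_enum_ord. Qed.

Lemma nth_word p (i : 'I_m) x0 : nth x0 (word p) i = p i.
Proof. by rewrite (nth_map i) ?size_enum_ord // nth_ord_enum. Qed.

Lemma word_inj : injective word.
Proof.
move=> p q eq_pq; apply/permP => i; apply/val_inj => /=.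
by rewrite -(nth_word p i 0) -(nth_word q i 0) eq_pq.
Qed.

Lemma word_permP t : reflect (exists p, t = word p) (perm_eq t (iota 0 m)).
Proof.
have wordE p : word p = [tuple tnth (map_tuple val (ord_tuple m)) (p i) | i < m].
  by apply: eq_map => i; rewrite tnth_map tnth_ord_tuple.
rewrite -val_enum_ord.
apply: (iffP (@tuple_permP _ m t (map_tuple val (ord_tuple m)))).
  by case=> p ->; exists p; rewrite wordE.
by case=> p ->; exists p; rewrite wordE.
Qed.

Lemma contains231 p : contains p [:: 2; 3; 1] = has231 (word p).
Proof.
apply/existsP/has231P => [[f /forallP f231] | [i [j [l [ij jl lm /andP[pli pij]]]]]].
  have pos (a b : 'I_3) : ((a < b) ==> (f a < f b)) &&
                 ((p (f a) < p (f b)) == (nth 0 [:: 2; 3; 1] a < nth 0 [:: 2; 3; 1] b)).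
    by have /forallP := f231 a; apply.
  have /andP[/implyP/(_ isT) f01 /eqP p01] := pos (@Ordinal 3 0 isT) (@Ordinal 3 1 isT).
  have /andP[/implyP/(_ isT) f12 _] := pos (@Ordinal 3 1 isT) (@Ordinal 3 2 isT).
  have /andP[_ /eqP p20] := pos (@Ordinal 3 2 isT) (@Ordinal 3 0 isT).
  exists (f (@Ordinal 3 0 isT)), (f (@Ordinal 3 1 isT)), (f (@Ordinal 3 2 isT)).
  by rewrite size_word !nth_word p01 p20 ltn_ord.
rewrite size_word in lm; have im : i < m by lia.
have jm : j < m by lia.
rewrite -[i]/(val (Ordinal im)) -[j]/(val (Ordinal jm)) -[l]/(val (Ordinal lm)) in pli pij.
rewrite !nth_word in pli pij.
exists [ffun a : 'I_3 =>
  if val a == 0 then Ordinal im else if val a == 1 then Ordinal jm else Ordinal lm].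
apply/forallP => a; apply/forallP => b; rewrite !ffunE.
by case: a b => [[|[|[|a]]] ?] // [[|[|[|b]]] ?] //=; rewrite ?ltnn //;
  first [apply/andP; split; [lia | apply/eqP; lia] | apply/eqP; lia].
Qed.

Lemma exists_word_nth (p : 'S_m) j v x0 :
  [exists i : 'I_m, (val i == j) && (val (p i) == v)] =
    (j < m) && (nth x0 (word p) j == v).
Proof.
apply/existsP/andP => [[i /andP[/eqP<- /eqP<-]] | [jm /eqP<-]].
  by split; [exact: ltn_ord | rewrite (nth_word p i)].
by exists (Ordinal jm); rewrite /= (nth_word p (Ordinal jm)) !eqxx.
Qed.

Lemma card_word_pred (Q : pred (seq nat)) (s : seq (seq nat)) : uniq s ->
  (forall t, (t \in s) = perm_eq t (iota 0 m) && Q t) ->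
  #|[set p : 'S_m | Q (word p)]| = size s.
Proof.
move=> uniq_s mem_s; rewrite cardE -(size_map word); apply/perm_size/uniq_perm => //.
  by rewrite (map_inj_uniq word_inj) enum_uniq.
move=> t; rewrite mem_s; apply/mapP/andP => [[p] | [/word_permP[p ->] Qp]].
  by rewrite mem_enum inE => Qp ->; split => //; apply/word_permP; exists p.
by exists p; rewrite // mem_enum inE.
Qed.

End PermutationWords.

Lemma card_X0 k m : 0 < m ->
  #|X0 k m| =
    count (fun t => (nth 0 t 0 == m.-1) && (nth 1 t k.-1 == 0)) (gen231 m 0 m).
Proof.
move=> m_gt0; set P := fun t => _ && _.
have -> : X0 k m = [set p : 'S_m | P (word p) && ~~ has231 (word p)].
  apply/setP => p; rewrite !inE /avoids contains231 (exists_word_nth p 0 m.-1 0).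
  rewrite (exists_word_nth p k.-1 0 1) m_gt0 /P andbC /=; case: ltnP => // le_mk.
  by rewrite [nth 1 _ _]nth_default ?size_word ?andbF.
rewrite -size_filter.
apply: (card_word_pred (Q := fun t => P t && ~~ has231 t)) => [|t].
  exact/filter_uniq/uniq_gen231.
by rewrite mem_filter mem_gen231 // andbCA.
Qed.

Theorem lemma1 (k : nat) : 1 <= k ->
  forall m : nat, 1 <= m -> #|X0 k m| = rhs_coef k m.
Proof.
move=> k_gt0 [//|m] _.
have -> : rhs_coef k m.+1 = iter k mulX (convpow catalan k.-1) m.+1.
  by rewrite /rhs_coef iter_mulX catpow_coefE.
have := count_gen231_head_max (fun t => nth 1 t k.-1 == 0) m 0 m.
rewrite card_X0 // succnK add0n => ->.
case: k k_gt0 => [//|[|k]] _.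
  by case: m => [|m] //=; rewrite count_pred0.
exact: count_gen231_min_at.
Qed.
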